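(* In the multi-agent combinatorial-actions contract model (described in the context) with a subadditive reward function $f$, the optimal single-agent contract is an $O(n)$-approximation of the optimal unconstrained contract: there exist a contract $\boldsymbol{\alpha}$ with $\alpha_i=0$ for all but at most one agent $i$, and a pure Nash equilibrium $S$ of $\boldsymbol{\alpha}$, such that $$\Big(1-\sum_i\alpha_i\Big)f(S)\ \ge\ \Omega\!\left(\frac1n\right)\max_{\boldsymbol{\alpha}^\star,\,S^\star\in\mathsf{NE}(\boldsymbol{\alpha}^\star)}\Big(1-\sum_i\alpha^\star_i\Big)f(S^\star).$$
   Context: Model: principal and agents $A=[n]$; each agent $i$ has a finite action set $T_i$ (pairwise disjoint), $T=\bigsqcup_iT_i$, costs $c_j\ge0$, $c(S_i)=\sum_{j\in S_i}c_j$. Reward $f:2^T\to[0,1]$ monotone, $f(\emptyset)=0$; subadditive means $f(S)+f(S')\ge f(S\cup S')$. Contract $\boldsymbol{\alpha}\in[0,1]^A$; agent $i$'s utility $\alpha_if(S)-c(S\cap T_i)$; $S\in\mathsf{NE}(\boldsymbol{\alpha})$ (pure Nash equilibrium) if no agent can gain by changing her own subset of actions. Principal's utility $(1-\sum_i\alpha_i)f(S)$. The $\Omega(\cdot)$ hides a universal constant. *)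

From HB Require Import structures.
From mathcomp Require Import all_boot all_order all_algebra.
From mathcomp Require Import reals.
Set Implicit Arguments. Unset Strict Implicit. Unset Printing Implicit Defensive.
Import Order.TTheory GRing.Theory Num.Theory.
Local Open Scope ring_scope.

Section Model.
Variables (R : realType) (n : nat) (T : finType).

(* [own j] is the agent owning action j; T_i = acts own i (pairwise disjoint,
   their disjoint union is T). *)
Definition acts (own : T -> 'I_n) (i : 'I_n) : {set T} := [set j | own j == i].

Definition cost (c : T -> R) (A : {set T}) : R := \sum_(j in A) c j.

Definition monotone_reward (f : {set T} -> R) : Prop :=
  forall S S' : {set T}, S \subset S' -> f S <= f S'.

Definition subadditive (f : {set T} -> R) : Prop :=
  forall S S' : {set T}, f (S :|: S') <= f S + f S'.

Definition agent_util (f : {set T} -> R) (c : T -> R) (own : T -> 'I_n)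
  (alpha : 'I_n -> R) (i : 'I_n) (S : {set T}) : R :=
  alpha i * f S - cost c (S :&: acts own i).

Definition is_NE (f : {set T} -> R) (c : T -> R) (own : T -> 'I_n)
  (alpha : 'I_n -> R) (S : {set T}) : Prop :=
  forall (i : 'I_n) (S' : {set T}), S' \subset acts own i ->
    agent_util f c own alpha i ((S :\: acts own i) :|: S')
    <= agent_util f c own alpha i S.

Definition is_contract (alpha : 'I_n -> R) : Prop :=
  forall i, 0 <= alpha i <= 1.

Definition single_agent (alpha : 'I_n -> R) : Prop :=
  exists i0 : 'I_n, forall i, i != i0 -> alpha i = 0.

Definition principal_util (f : {set T} -> R) (alpha : 'I_n -> R) (S : {set T}) : R :=
  (1 - \sum_i alpha i) * f S.

End Model.

From HB Require Import structures.
From mathcomp Require Import all_boot all_order all_algebra.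
From mathcomp Require Import reals.
From mathcomp Require classical_sets.
From mathcomp Require Import lra.
Set Implicit Arguments. Unset Strict Implicit. Unset Printing Implicit Defensive.
Import Order.TTheory GRing.Theory Num.Theory.
Local Open Scope ring_scope.

(** Let q be the supremum of the principal's utility over single-agent
   contracts with an equilibrium. Fix a contract a with equilibrium S and
   principal share P = 1 - Σ a_i > 0, and let k be an agent with the largest
   share, so that a_i ≤ 1/2 for every other agent i. If agent i alone is
   offered the share t, her best response B_t satisfies (1 - t) f(B_t) ≤ q,
   and comparing it with her deviation from S to B_t bounds
   (t - a_i) f(S ∩ T_i) by t f(B_t). Taking t = 3/4 gives f(S ∩ T_i) ≤ 12 q
   for i ≠ k, and t = a_k + P/2 gives P f(S ∩ T_k) ≤ 2 q + 2 f(S \ T_k).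
   By subadditivity P f(S) ≤ 3 f(S \ T_k) + 2 q ≤ 38 n q, so a single-agent
   contract reaching q/2 is a 1/(76 n)-approximation. *)

Lemma exists_ge_half_sup (R : realType) (E : classical_sets.set R) :
  classical_sets.has_sup E -> (exists2 v, E v & 0 <= v) ->
  exists2 v, E v & sup E / 2 <= v.
Proof.
move=> supE [v Ev v_ge0]; have [sup_le0|sup_gt0] := lerP (sup E) 0.
  by exists v => //; lra.
have [w Ew lt_w] : exists2 w, E w & sup E - sup E / 2 < w.
  by apply: sup_adherent => //; lra.
by exists w => //; lra.
Qed.

Lemma le_half_of_le_other (R : realFieldType) (I : finType) (a : I -> R) (i k : I) :
  (forall j, 0 <= a j) -> \sum_j a j <= 1 -> i != k -> a i <= a k ->
  a i <= 1 / 2.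
Proof.
move=> a_ge0 sum_le1 ik le_ik.
have : a k + a i <= \sum_j a j.
  rewrite (bigD1 k) //= (bigD1 i) //= addrA lerDl.
  by apply: sumr_ge0 => j _.
lra.
Qed.

Lemma subadditive_bigcup (R : realType) (T I : finType) (f : {set T} -> R)
    (P : pred I) (F : I -> {set T}) :
  f set0 = 0 -> subadditive f ->
  f (\bigcup_(i | P i) F i) <= \sum_(i | P i) f (F i).
Proof.
move=> f0 f_sub.
apply: (big_ind2 (fun U x => f U <= x)) => [|U1 x1 U2 x2 le1 le2|//].
  by rewrite f0.
by apply: le_trans (f_sub U1 U2) _; apply: lerD.
Qed.

Section Actions.
Variables (n : nat) (T : finType) (own : T -> 'I_n).

Lemma setDU_acts_setI (i : 'I_n) (S B : {set T}) :
  B \subset acts own i -> ((S :\: acts own i) :|: B) :&: acts own i = B.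
Proof.
move=> sBA; rewrite setIUl setIDAC setDIl setDv setI0 set0U.
exact/setIidPl.
Qed.

Lemma setI_acts_eq0 (i j : 'I_n) (B : {set T}) :
  B \subset acts own i -> j != i -> B :&: acts own j = set0.
Proof.
move=> sBA ji; apply/setP => x; rewrite !inE.
apply/andP => -[/(subsetP sBA)]; rewrite inE => /eqP -> /eqP ij.
by rewrite ij eqxx in ji.
Qed.

Lemma setD_acts_bigcup (S : {set T}) (k : 'I_n) :
  S :\: acts own k = \bigcup_(i | i != k) (S :&: acts own i).
Proof.
apply/setP => x; apply/idP/bigcupP; rewrite !inE.
  by case/andP=> xk xS; exists (own x); rewrite // !inE xS eqxx.
by case=> i ik; rewrite !inE => /andP[xS /eqP ->]; rewrite ik.
Qed.

End Actions.

Section SingleAgentContracts.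
Variables (R : realType) (n : nat) (T : finType) (own : T -> 'I_n).
Variables (c : T -> R) (f : {set T} -> R).
Hypothesis c_ge0 : forall j, 0 <= c j.
Hypothesis f_ge0 : forall S, 0 <= f S.
Hypothesis f_le1 : forall S, f S <= 1.

Definition best_response (i : 'I_n) (t : R) (B : {set T}) : Prop :=
  B \subset acts own i /\
  forall B' : {set T}, B' \subset acts own i -> t * f B' - cost c B' <= t * f B - cost c B.

Lemma best_response_exists (i : 'I_n) (t : R) : exists B, best_response i t B.
Proof.
have [B sBA B_max] := @arg_maxP _ _ {set T} set0 (fun B => B \subset acts own i)
  (fun B => t * f B - cost c B) (sub0set _).
by exists B.
Qed.

Definition single_contract (i : 'I_n) (t : R) : 'I_n -> R :=
  fun j => if j == i then t else 0.

Lemma sum_single_contract i t : \sum_j single_contract i t j = t.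
Proof.
rewrite (bigD1 i) //= /single_contract eqxx big1 ?addr0 // => j.
by move/negbTE ->.
Qed.

Lemma single_contract_is_contract i t : 0 <= t <= 1 -> is_contract (single_contract i t).
Proof. by move=> t01 j; rewrite /single_contract; case: eqP; rewrite ?lexx ?ler01. Qed.

Lemma single_contract_single_agent i t : single_agent (single_contract i t).
Proof. by exists i => j; rewrite /single_contract => /negbTE ->. Qed.

Lemma cost_ge0 (A : {set T}) : 0 <= cost c A.
Proof. exact: sumr_ge0. Qed.

Lemma best_response_NE i t B :
  best_response i t B -> is_NE f c own (single_contract i t) B.
Proof.
move=> [sBA B_max] j S'; rewrite /agent_util /single_contract.
have [->|ji] := eqVneq j i => sS'A.
  have /eqP -> : B :\: acts own i == set0 by rewrite setD_eq0.
  by rewrite set0U (setIidPl sS'A) (setIidPl sBA); apply: B_max.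
rewrite (setI_acts_eq0 sBA ji) /cost big_set0 !mul0r sub0r subr0 oppr_le0.
exact: cost_ge0.
Qed.

Definition single_values : classical_sets.set R := fun v =>
  exists alpha S, [/\ is_contract alpha, single_agent alpha,
                      is_NE f c own alpha S & v = principal_util f alpha S].

Lemma single_values_best_response i t B :
  0 <= t <= 1 -> best_response i t B -> single_values ((1 - t) * f B).
Proof.
move=> t01 brB; exists (single_contract i t), B; split.
- exact: single_contract_is_contract.
- exact: single_contract_single_agent.
- exact: best_response_NE.
- by rewrite /principal_util sum_single_contract.
Qed.

Lemma single_values_nonneg (i : 'I_n) : exists2 v, single_values v & 0 <= v.
Proof.
have [B brB] := best_response_exists i 0.
exists ((1 - 0) * f B); last by rewrite subr0 mul1r.
by apply: single_values_best_response brB; rewrite lexx ler01.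
Qed.

Lemma has_sup_single_values (i : 'I_n) : classical_sets.has_sup single_values.
Proof.
split; first by have [v Ev _] := single_values_nonneg i; exists v.
exists 1 => _ [alpha [S [alpha_ctr _ _ ->]]]; rewrite /principal_util.
have : 0 <= \sum_j alpha j by apply: sumr_ge0 => j _; case/andP: (alpha_ctr j).
by have := f_ge0 S; have := f_le1 S; nra.
Qed.

End SingleAgentContracts.

Section Benchmark.
Variables (R : realType) (n : nat) (T : finType) (own : T -> 'I_n).
Variables (c : T -> R) (f : {set T} -> R).
Hypothesis n_gt0 : (0 < n)%N.
Hypothesis c_ge0 : forall j, 0 <= c j.
Hypothesis f_ge0 : forall S, 0 <= f S.
Hypothesis f0 : f set0 = 0.
Hypothesis f_mono : monotone_reward f.
Hypothesis f_sub : subadditive f.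
Variables (a : 'I_n -> R) (S : {set T}) (q : R).
Hypothesis a_contract : is_contract a.
Hypothesis S_NE : is_NE f c own a S.
Hypothesis q_ub : forall v, single_values own c f v -> v <= q.

Let a_ge0 i : 0 <= a i. Proof. by case/andP: (a_contract i). Qed.
Let Sa i := S :&: acts own i.

Lemma NE_best_response_deviation i t B :
  best_response own c f i t B ->
  t * f (Sa i) - a i * f S <= t * f B - a i * f ((S :\: acts own i) :|: B).
Proof.
move=> [sBA B_max].
have := S_NE sBA; rewrite /agent_util setDU_acts_setI //.
by have := B_max _ (subsetIr S (acts own i)); lra.
Qed.

Lemma NE_best_response_share i t B :
  best_response own c f i t B -> (t - a i) * f (Sa i) <= t * f B.
Proof.
move=> brB; have := NE_best_response_deviation brB.
have : f S <= f ((S :\: acts own i) :|: B) + f (Sa i).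
  apply: le_trans (_ : f (S :\: acts own i) + f (Sa i) <= _).
    by have := f_sub (S :\: acts own i) (Sa i); rewrite setUC setID.
  by rewrite lerD2r f_mono // subsetUl.
by have := a_ge0 i; nra.
Qed.

Lemma NE_best_response_gain i t B :
  best_response own c f i t B -> t * f (Sa i) - a i * f S <= (t - a i) * f B.
Proof.
move=> brB; have := NE_best_response_deviation brB.
have : f B <= f ((S :\: acts own i) :|: B) by rewrite f_mono // subsetUr.
by have := a_ge0 i; nra.
Qed.

Lemma best_response_value_le i t B :
  0 <= t <= 1 -> best_response own c f i t B -> (1 - t) * f B <= q.
Proof. by move=> t01 brB; apply/q_ub/(single_values_best_response c_ge0 t01 brB). Qed.

Lemma minor_agent_share_le i : a i <= 1 / 2 -> f (Sa i) <= 12 * q.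
Proof.
move=> ai_le; have [B brB] := best_response_exists own c f i (3 / 4).
have := best_response_value_le _ brB; have := NE_best_response_share brB.
by have := f_ge0 (Sa i); have := f_ge0 B; nra.
Qed.

Lemma major_agent_share_le k p :
  0 < p -> a k + p <= 1 -> p * f (Sa k) <= 2 * q + 2 * (f S - f (Sa k)).
Proof.
move=> p_gt0 akp_le1; have ak_ge0 := a_ge0 k.
have [B brB] := best_response_exists own c f k (a k + p / 2).
have := best_response_value_le _ brB; have := NE_best_response_gain brB.
have : f (Sa k) <= f S by rewrite f_mono // subsetIl.
by have := f_ge0 (Sa k); have := f_ge0 B; nra.
Qed.

Lemma NE_utility_le : principal_util f a S <= 38 * n%:R * q.
Proof.
pose i0 := Ordinal n_gt0.
have q_ge0 : 0 <= q by have [v /q_ub] := single_values_nonneg own c_ge0 f_ge0 i0; lra.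
have n_ge1 : 1 <= n%:R :> R by rewrite ler1n.
rewrite /principal_util; set P := 1 - _.
have [P_le0|P_gt0] := lerP P 0; first by have := f_ge0 S; nra.
have sum_ge0 : 0 <= \sum_i a i by apply: sumr_ge0 => i _.
pose k := [arg max_(i > i0) a i]%O.
have a_le_k i : a i <= a k.
  by rewrite /k; case: (arg_maxP a (isT : predT i0)) => j _; apply.
have ak_le : a k + P <= 1.
  have : a k <= \sum_i a i by rewrite (bigD1 k) //= lerDl sumr_ge0.
  by rewrite /P; lra.
have minor_le i : i != k -> f (Sa i) <= 12 * q.
  move=> ik; apply: minor_agent_share_le.
  by apply: (le_half_of_le_other a_ge0 _ ik (a_le_k i)); rewrite /P in P_gt0; lra.
have rest_le : f (S :\: acts own k) <= 12 * q * n%:R.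
  rewrite setD_acts_bigcup; apply: le_trans (subadditive_bigcup _ _ f0 f_sub) _.
  rewrite big_mkcond; apply: le_trans (_ : \sum_(i < n) 12 * q <= _).
    by apply: ler_sum => i _; case: ifP => [/minor_le //|_]; lra.
  by rewrite sumr_const card_ord mulr_natr.
have split_S : f S <= f (S :\: acts own k) + f (Sa k).
  by have := f_sub (S :\: acts own k) (Sa k); rewrite setUC setID.
have := major_agent_share_le P_gt0 ak_le.
have : P <= 1 by rewrite /P; lra.
by have := f_ge0 (Sa k); have := f_ge0 (S :\: acts own k); nra.
Qed.

End Benchmark.

Theorem theoremC1 :
  exists C : nat, (0 < C)%N /\
  forall (R : realType) (n : nat) (T : finType) (own : T -> 'I_n)
         (c : T -> R) (f : {set T} -> R),
    (0 < n)%N ->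
    (forall j, 0 <= c j) ->
    (forall S, 0 <= f S <= 1) ->
    f set0 = 0 ->
    monotone_reward f ->
    subadditive f ->
    exists (alpha : 'I_n -> R) (S : {set T}),
      is_contract alpha /\ single_agent alpha /\ is_NE f c own alpha S /\
      forall (alpha' : 'I_n -> R) (S' : {set T}),
        is_contract alpha' -> is_NE f c own alpha' S' ->
        principal_util f alpha S >= (C * n)%:R^-1 * principal_util f alpha' S'.
Proof.
exists 76%N; split => // R n T own c f n_gt0 c_ge0 f01 f0 f_mono f_sub.
have f_ge0 S : 0 <= f S by case/andP: (f01 S).
have f_le1 S : f S <= 1 by case/andP: (f01 S).
pose i0 := Ordinal n_gt0.
have supE := has_sup_single_values own c_ge0 f_ge0 f_le1 i0.
have [_ [alpha [S [alpha_ctr alpha_single S_NE ->]]] half_le] :=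
  exists_ge_half_sup supE (single_values_nonneg own c_ge0 f_ge0 i0).
exists alpha, S; split=> //; split=> //; split=> // alpha' S' alpha'_ctr S'_NE.
have := NE_utility_le n_gt0 c_ge0 f_ge0 f0 f_mono f_sub alpha'_ctr S'_NE
  (fun v => @sup_upper_bound _ _ supE v).
have n_gt0R : 0 < n%:R :> R by rewrite ltr0n.
rewrite natrM ler_pdivrMl ?mulr_gt0 //; nra.
Qed.
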